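(* Let $\alpha,\beta\in\mathbb{R}\setminus\mathbb{Q}$, $0<\gamma<1$, $0<\varepsilon<1/2$ and $T>e$, and assume \[ \frac{1}{T^2}m_{\mathbb{R}^2}\left(\left\{(s,t)\in[0,T]^2\ \middle|\ a_{s,t}\tau_{\alpha,\beta}\Gamma\in X_\varepsilon\right\}\right)\geq\gamma, \] where $m_{\mathbb{R}^2}$ is Lebesgue measure on $\mathbb{R}^2$. Then \[ \frac{(\log T)^2}{T^2}\left|\left\{n\in\mathbb{N}\ \middle|\ n<e^{2T},\ n\langle n\alpha\rangle\langle n\beta\rangle\leq\varepsilon^3\right\}\right|\geq\frac{\gamma}{18}. \]
   Context: $\Gamma=\mathrm{SL}(3,\mathbb{Z})$, $X=\mathrm{SL}(3,\mathbb{R})/\Gamma$, where $g\Gamma\in X$ is identified with the unimodular lattice $g\mathbb{Z}^3\subset\mathbb{R}^3$; $\mathrm{SL}(3,\mathbb{R})$ acts on $X$ by left multiplication. For $s,t\in\mathbb{R}$, $a_{s,t}=\mathrm{diag}(e^{-s-t},e^s,e^t)$. $\tau_{\alpha,\beta}$ is the lower triangular unipotent matrix with first column $(1,\alpha,\beta)^t$ and other columns $(0,1,0)^t,(0,0,1)^t$. For $0<\varepsilon<1/2$, $X_\varepsilon=\{x\in X : x\cap \overline{B_\varepsilon}\neq\{0\}\}$, where $B_\varepsilon=\{v\in\mathbb{R}^3: \|v\|_\infty<\varepsilon\}$ and $\|v\|_\infty$ is the maximum of the absolute values of the coordinates. $\langle x\rangle$ denotes the distance from $x\in\mathbb{R}$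 to the nearest integer. *)

From HB Require Import structures.
From mathcomp Require Import all_boot all_order all_algebra.
From mathcomp Require Import all_classical all_reals all_analysis.
Set Implicit Arguments. Unset Strict Implicit. Unset Printing Implicit Defensive.
Import Order.TTheory GRing.Theory Num.Theory.
Local Open Scope ring_scope.

Section Defs.
Variable R : realType.

Definition a_st (s t : R) : 'M[R]_3 :=
  \matrix_(i < 3, j < 3)
    (if i == j then
       (if val i == 0%N then expR (- s - t)
        else if val i == 1%N then expR s else expR t)
     else 0).

Definition tau (al be : R) : 'M[R]_3 :=
  \matrix_(i < 3, j < 3)
    (if i == j then 1
     else if val j == 0%N then (if val i == 1%N then al else be)
     else 0).

Definition supnorm3 (v : 'cV[R]_3) : R := \big[Num.max/0]_(i < 3) `|v i ord0|.

(* g Gamma in X_eps : the lattice g Z^3 meets the closed sup-norm ball of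
   radius eps in a nonzero vector *)
Definition in_X_eps (eps : R) (g : 'M[R]_3) : Prop :=
  exists z : 'cV[int]_3, z != 0 /\
    supnorm3 (g *m map_mx (fun k : int => k%:~R) z) <= eps.

Definition dist_int (x : R) : R :=
  Num.min (x - (Num.floor x)%:~R) ((Num.floor x + 1)%:~R - x).

Definition count_good (al be eps T : R) : nat :=
  \sum_(1 <= n < (Num.truncn (expR (2 * T))).+1
        | (n%:R < expR (2 * T)) &&
          (n%:R * dist_int (n%:R * al) * dist_int (n%:R * be) <= eps ^+ 3)) 1%N.

End Defs.

From HB Require Import structures.
From mathcomp Require Import all_boot all_order all_algebra.
From mathcomp Require Import all_classical all_reals all_analysis.
From mathcomp Require Import ring lra zify measurable_realfun.
Import Order.TTheory GRing.Theory Num.Theory.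
Import numFieldNormedType.Exports.
Set Implicit Arguments. Unset Strict Implicit.
Local Open Scope classical_set_scope.
Local Open Scope ring_scope.

(* Dani correspondence: a_{s,t} tau Gamma lies in X_eps exactly when some n >= 1, together
   with the integers nearest to n al and n be, gives a vector of the eps-box, i.e.
   n e^{-s-t} <= eps, e^s <n al> <= eps and e^t <n be> <= eps; such an n has n < e^{2T} and
   n <n al> <n be> <= eps^3, so it is counted.  For fixed n these (s, t) lie in a right
   isosceles triangle whose leg is an explicit logarithmic quantity.  If all legs are at most
   6 log T, the triangles have area at most 18 (log T)^2 and subadditivity of the measure
   gives the bound.  Otherwise some counted n satisfies n <n al> <n be> T^6 < eps^3 and
   n T^6 < eps e^{2T}; since <k x> <= k <x>, all multiples k n with k <= T^2 are counted,
   so there are at least T^2 - 1 of them. *)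

Local Notation i1 := (@Ordinal 3 1 isT).
Local Notation i2 := (@Ordinal 3 2 isT).

Section DistInt.
Variable R : realType.
Implicit Types (x : R) (k : int).

Lemma dist_int_le x k : dist_int x <= `|x - k%:~R|.
Proof.
have flx := floor_le x.
have xlt : x < (Num.floor x + 1)%:~R by rewrite -floor_lt_int ltrDl.
rewrite /dist_int ge_min; have [kx|xk] := lerP k (Num.floor x).
  have : k%:~R <= (Num.floor x)%:~R :> R by rewrite ler_int.
  by move=> ?; rewrite ger0_norm; [apply/orP; left|]; lra.
have : (Num.floor x + 1)%:~R <= k%:~R :> R by rewrite ler_int; lia.
by move=> ?; rewrite ler0_norm; [apply/orP; right|]; lra.
Qed.

Lemma dist_int_attained x : exists k, dist_int x = `|x - k%:~R|.
Proof.
have flx := floor_le x.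
have xlt : x < (Num.floor x + 1)%:~R by rewrite -floor_lt_int ltrDl.
rewrite /dist_int; have [_|_] := leP (x - (Num.floor x)%:~R) ((Num.floor x + 1)%:~R - x).
  by exists (Num.floor x); rewrite ger0_norm // subr_ge0.
by exists (Num.floor x + 1); rewrite ler0_norm ?subr_le0 ?opprB //; apply: ltW.
Qed.

Lemma dist_int_ge0 x : 0 <= dist_int x.
Proof. by have [k ->] := dist_int_attained x. Qed.

Lemma dist_int_natM (m : nat) x : dist_int (m%:R * x) <= m%:R * dist_int x.
Proof.
have [k ->] := dist_int_attained x.
apply: le_trans (dist_int_le _ (k * m%:Z)) _.
have -> : ((k * m%:Z)%:~R : R) = m%:R * k%:~R by rewrite intrM mulrC.
by rewrite -mulrBr normrM ger0_norm.
Qed.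

Lemma dist_int_absz_le x k (l : int) : dist_int (`|k|%:R * x) <= `|x * k%:~R + l%:~R|.
Proof.
rewrite natr_absz intr_norm; have [k_le0|k_gt0] := ler0P (k%:~R : R).
  apply: le_trans (dist_int_le _ l) _.
  by rewrite (_ : _ - _ = - (x * k%:~R + l%:~R)) ?normrN //; ring.
by apply: le_trans (dist_int_le _ (- l)) _; rewrite rmorphN /= opprK mulrC.
Qed.

Lemma dist_int_gt0 x (n : nat) : (forall q : rat, x <> ratr q) -> (0 < n)%N ->
  0 < dist_int (n%:R * x).
Proof.
move=> x_irr n_gt0; rewrite lt_neqAle dist_int_ge0 andbT; apply/eqP => dist0.
have [k] := dist_int_attained (n%:R * x).
rewrite -dist0 => /esym/eqP; rewrite normr_eq0 subr_eq0 => /eqP nxE.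
apply: (x_irr (k%:~R / n%:R)).
rewrite rmorphM /= fmorphV /= rmorph_int rmorph_nat -nxE mulrC mulrA mulVf ?mul1r //.
by rewrite pnatr_eq0 -lt0n.
Qed.

Lemma intr_eq0_of_small (y : R) k : 1 <= y -> `|y * k%:~R| < 1 -> k = 0.
Proof.
move=> y_ge1 small; have : `|k%:~R : R| < 1.
  apply: le_lt_trans small; rewrite normrM (ger0_norm (le_trans ler01 y_ge1)).
  by rewrite ler_peMl.
by rewrite -intr_norm -[1]/((1 : int)%:~R) ltr_int; lia.
Qed.

End DistInt.

Section Lattice.
Variable R : realType.

Lemma ord3_lift : lift ord0 ord0 = i1 /\ lift ord0 (lift ord0 ord0) = i2.
Proof. by split; apply: val_inj. Qed.

Lemma a_st_tau_mulE (al be s t : R) (z : 'cV[int]_3) :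
  let v := a_st s t *m tau al be *m map_mx (fun k : int => k%:~R) z in
  [/\ v ord0 ord0 = expR (- s - t) * (z ord0 ord0)%:~R,
      v i1 ord0 = expR s * (al * (z ord0 ord0)%:~R + (z i1 ord0)%:~R) &
      v i2 ord0 = expR t * (be * (z ord0 ord0)%:~R + (z i2 ord0)%:~R)].
Proof.
have [e1 e2] := ord3_lift.
rewrite /a_st /tau; split;
  by rewrite !mxE !big_ord_recl !big_ord0 /= !mxE !big_ord_recl !big_ord0 /= !mxE /= e1 e2; ring.
Qed.

Lemma supnorm3_le (v : 'cV[R]_3) (e : R) : 0 <= e ->
  (supnorm3 v <= e) <-> [/\ `|v ord0 ord0| <= e, `|v i1 ord0| <= e & `|v i2 ord0| <= e].
Proof.
have [e1 e2] := ord3_lift.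
move=> e_ge0; rewrite /supnorm3 !big_ord_recl big_ord0 /= !ge_max e_ge0 andbT e1 e2.
by split => [/and3P[]|[-> -> ->]].
Qed.

Lemma in_X_eps_a_tauE (al be eps s t : R) : 0 <= eps ->
  in_X_eps eps (a_st s t *m tau al be) <->
  exists z0 z1 z2 : int, [/\ ~~ [&& z0 == 0, z1 == 0 & z2 == 0],
    `|expR (- s - t) * z0%:~R| <= eps,
    `|expR s * (al * z0%:~R + z1%:~R)| <= eps &
    `|expR t * (be * z0%:~R + z2%:~R)| <= eps].
Proof.
move=> eps_ge0; split.
  case=> z [z_neq0]; rewrite supnorm3_le //; case: (a_st_tau_mulE al be s t z) => -> -> ->.
  case=> h0 h1 h2; exists (z ord0 ord0), (z i1 ord0), (z i2 ord0); split => //.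
  apply: contra z_neq0 => /and3P[/eqP z0 /eqP z1 /eqP z2]; apply/eqP/matrixP => i j.
  by rewrite (ord1 j) mxE; case: i => -[|[|[|//]]] i_lt;
    [rewrite -z0 | rewrite -z1 | rewrite -z2]; congr (z _ _); apply: val_inj.
case=> z0 [z1 [z2 [z_neq0 h0 h1 h2]]].
pose z : 'cV[int]_3 := \col_i (if val i == 0%N then z0 else if val i == 1%N then z1 else z2).
exists z; split.
  apply: contra z_neq0 => /eqP /matrixP zE.
  by move: (zE ord0 ord0) (zE i1 ord0) (zE i2 ord0); rewrite !mxE /= => -> -> ->; rewrite !eqxx.
by rewrite supnorm3_le //; case: (a_st_tau_mulE al be s t z) => -> -> ->; rewrite !mxE.
Qed.

End Lattice.

Lemma measurable_bool_set d (T : measurableType d) (P : T -> bool) :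
  measurable_fun setT P -> measurable [set x | P x].
Proof.
move=> mP; rewrite (_ : [set x | P x] = setT `&` P @^-1` [set true]); first exact: mP.
by rewrite setTI; apply/seteqP; split => x /=.
Qed.

Section Triangle.
Variable R : realType.
Local Notation mu := (@lebesgue_measure R).

Definition triangle (a b c : R) : set (R * R) :=
  [set p | [&& p.1 <= a, p.2 <= b & c <= p.1 + p.2]].

Lemma measurable_triangle (a b c : R) : measurable (triangle a b c).
Proof.
have mfst := @measurable_fst _ _ R R; have msnd := @measurable_snd _ _ R R.
apply: measurable_bool_set; repeat apply: measurable_and; apply: measurable_fun_ler => //.
exact: measurable_funD.
Qed.

Lemma integral_ramp (c a : R) : c < a ->
  (\int[mu]_(x in `[c, a]) (x - c)%:E = ((a - c) ^+ 2 / 2)%:E)%E.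
Proof.
move=> ca; pose F x : R := (x - c) * (x - c) / 2.
have F_derivable x : derivable F x 1 by apply: derivableM => //; apply: derivableM.
have F_cont (x : R) : {for x, continuous F}.
  by apply: differentiable_continuous; exact/derivable1_diffP.
rewrite (@continuous_FTC2 _ _ F) //.
- by rewrite /F subrr !mul0r sube0 expr2.
- apply: continuous_in_subspaceT => x _.
  by apply: cvgD; [exact: cvg_id | exact: cvg_cst].
- split; first by move=> x _; exact: F_derivable.
  + exact: cvg_at_right_filter (F_cont c).
  + exact: cvg_at_left_filter (F_cont a).
- move=> x _; rewrite /F derive1E derive_val !scaler0 add0r subr0 /GRing.scale /=.
  by field.
Qed.

Lemma triangle_xsection (a b c s : R) :
  xsection (triangle a b c) s = if s <= a then `[c - s, b]%classic else set0.
Proof.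
apply/seteqP; split => t.
  move=> /xsectionP /and3P[/= sa tb cst]; rewrite sa /= in_itv /= tb andbT; lra.
case: ifP => // sa; rewrite /= in_itv /= => /andP[cst tb].
by apply/xsectionP; rewrite /triangle /= sa tb /=; lra.
Qed.

Lemma measure_triangle_le (a b c : R) :
  ((mu \x mu) (triangle a b c) <= ((Num.max 0 (a + b - c)) ^+ 2 / 2)%:E)%E.
Proof.
pose c0 := c - b; pose g := (fun s => (s - c0)%:E) \_ `[c0, a].
have g_ge0 s : (0 <= g s)%E.
  rewrite /g patchE; case: ifP => // /set_mem; rewrite /= in_itv /= => /andP[c0s _].
  by rewrite lee_fin subr_ge0.
have section_le s : (mu (xsection (triangle a b c) s) <= g s)%E.
  rewrite triangle_xsection; case: ifP => [sa|]; last by rewrite measure0.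
  rewrite lebesgue_measure_itv /=; case: ifP => _; last exact: g_ge0.
  have [c0s|sc0] := leP c0 s.
    rewrite /g patchE mem_set /=; last by rewrite in_itv /= c0s sa.
    by rewrite -EFinD lee_fin /c0; lra.
  by apply: le_trans (g_ge0 s); rewrite -EFinD lee_fin; rewrite /c0 in sc0; lra.
rewrite /product_measure1.
apply: le_trans (@ge0_le_integral _ _ _ mu setT measurableT _ g _ _ _ _) _ => //.
- exact: (@measurable_fun_xsection _ _ _ _ _ mu _ (measurable_triangle a b c)).
- apply/(measurable_restrictT _ _).1 => //.
  by apply/measurable_EFinP; apply: measurable_funB.
- by move=> s _; exact: section_le.
rewrite -integral_mkcond; have [c0a|ac0] := ltP c0 a.
  rewrite integral_ramp // lee_fin max_r; last by rewrite /c0 in c0a; lra.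
  by rewrite /c0 (_ : a - (c - b) = a + b - c) //; ring.
rewrite integral0_eq ?lee_fin ?divr_ge0 ?sqr_ge0 // => x; rewrite /= in_itv /= => /andP[c0x xa].
by rewrite (_ : x = c0) ?subrr //; apply/eqP; rewrite eq_le c0x (le_trans xa ac0).
Qed.

End Triangle.

Lemma expRM_le (R : realType) (x d e : R) : 0 < d -> 0 < e ->
  (expR x * d <= e) = (x <= ln e - ln d).
Proof.
by move=> d_gt0 e_gt0; rewrite -[in RHS]ler_expR expRD expRN !lnK ?posrE // ler_pdivlMr.
Qed.

Section Counting.
Variables (R : realType) (al be eps T : R).
Hypotheses (eps_gt0 : 0 < eps) (eps_lt1 : eps < 1).
Hypotheses (al_irr : forall q : rat, al <> ratr q) (be_irr : forall q : rat, be <> ratr q).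
Local Notation mu := (@lebesgue_measure R).
Local Notation approx n := (n%:R * dist_int (n%:R * al) * dist_int (n%:R * be)).

(* Among the vectors of a_{s,t} tau Z^3 with first integer coordinate n, the one closest
   to 0 lies in the closed eps-box. *)
Definition hits (n : nat) (p : R * R) : bool :=
  [&& n%:R * expR (- p.1 - p.2) <= eps,
      expR p.1 * dist_int (n%:R * al) <= eps &
      expR p.2 * dist_int (n%:R * be) <= eps].

Lemma in_X_eps_hits (s t : R) : 0 <= s -> 0 <= t ->
  in_X_eps eps (a_st s t *m tau al be) <-> exists2 n : nat, (0 < n)%N & hits n (s, t).
Proof.
move=> s_ge0 t_ge0; rewrite in_X_eps_a_tauE ?ltW //.
have expR_ge1 (x : R) : 0 <= x -> 1 <= expR x by rewrite -expR0 ler_expR.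
split=> [[z0 [z1 [z2 [z_neq0 h0 h1 h2]]]] | [n n_gt0 /and3P[h0 h1 h2]]].
  have [z0E|z0_neq0] := eqVneq z0 0.
    (* a nonzero integer stretched by e^s >= 1 or e^t >= 1 cannot be eps-small *)
    move: h1 h2; rewrite z0E mulr0z !mulr0 !add0r => h1 h2.
    have z1E := intr_eq0_of_small (expR_ge1 _ s_ge0) (le_lt_trans h1 eps_lt1).
    have z2E := intr_eq0_of_small (expR_ge1 _ t_ge0) (le_lt_trans h2 eps_lt1).
    by move: z_neq0; rewrite z0E z1E z2E !eqxx.
  exists `|z0|%N; first by rewrite absz_gt0.
  apply/and3P; split; rewrite /= -[expR _](ger0_norm (expR_ge0 _)).
  - by rewrite mulrC natr_absz intr_norm -normrM.
  - by apply: le_trans h1; rewrite normrM ler_pM2l ?normr_gt0 ?gt_eqF ?expR_gt0 // dist_int_absz_le.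
  - by apply: le_trans h2; rewrite normrM ler_pM2l ?normr_gt0 ?gt_eqF ?expR_gt0 // dist_int_absz_le.
have [k1 k1E] := dist_int_attained (n%:R * al).
have [k2 k2E] := dist_int_attained (n%:R * be).
exists n%:Z, (- k1), (- k2); split.
- by rewrite negb_and -lt0n n_gt0.
- by rewrite normrM ger0_norm ?expR_ge0 // normr_nat mulrC.
- by rewrite normrM ger0_norm ?expR_ge0 // rmorphN /= (mulrC al) -k1E.
- by rewrite normrM ger0_norm ?expR_ge0 // rmorphN /= (mulrC be) -k2E.
Qed.

Definition hit_set (n : nat) : set (R * R) :=
  [set p | [&& 0 <= p.1 <= T, 0 <= p.2 <= T & hits n p]].

Definition times_in_X_eps : set (R * R) :=
  [set p | [/\ 0 <= p.1 <= T, 0 <= p.2 <= T & in_X_eps eps (a_st p.1 p.2 *m tau al be)]].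

Definition triangle_leg (n : nat) : R :=
  Num.min T (ln eps - ln (dist_int (n%:R * al))) +
  Num.min T (ln eps - ln (dist_int (n%:R * be))) - (ln n%:R - ln eps).

Lemma measurable_hit_set n : measurable (hit_set n).
Proof.
have mfst := @measurable_fst _ _ R R; have msnd := @measurable_snd _ _ R R.
apply: measurable_bool_set; rewrite /hits.
repeat apply: measurable_and; apply: measurable_fun_ler => //;
  apply: measurable_funM => //; apply: measurableT_comp => //.
by apply: measurable_funB => //; exact: measurableT_comp.
Qed.

Lemma hit_set_sub_triangle n : (0 < n)%N ->
  hit_set n `<=` triangle (Num.min T (ln eps - ln (dist_int (n%:R * al))))
                          (Num.min T (ln eps - ln (dist_int (n%:R * be))))
                          (ln n%:R - ln eps).
Proof.
move=> n_gt0 [s t] /and3P[/andP[_ sT] /andP[_ tT] /and3P[/= hn ha hb]].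
rewrite !expRM_le ?dist_int_gt0 // in ha hb.
rewrite mulrC (_ : - s - t = - (s + t)) ?opprD // expRM_le ?ltr0n // in hn.
by rewrite /triangle /= !le_min sT tT ha hb /=; lra.
Qed.

Lemma measure_hit_set_le n : (0 < n)%N ->
  ((mu \x mu) (hit_set n) <= ((Num.max 0 (triangle_leg n)) ^+ 2 / 2)%:E)%E.
Proof.
move=> n_gt0; apply: le_trans (measure_triangle_le _ _ _).
apply: le_measure; rewrite ?inE; [exact: measurable_hit_set | exact: measurable_triangle |].
exact: hit_set_sub_triangle.
Qed.

Definition good (n : nat) : bool := (n%:R < expR (2 * T)) && (approx n <= eps ^+ 3).

Definition good_seq : seq nat :=
  [seq n <- index_iota 1 (Num.truncn (expR (2 * T))).+1 | good n].

Lemma count_goodE : count_good al be eps T = size good_seq.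
Proof. by rewrite /count_good sum1_count size_filter. Qed.

Lemma uniq_good_seq : uniq good_seq.
Proof. exact/filter_uniq/iota_uniq. Qed.

Lemma mem_good_seq n : (n \in good_seq) = (0 < n)%N && good n.
Proof.
rewrite mem_filter mem_index_iota ltnS; case good_n: (good n); rewrite ?andbF //=.
by case/andP: good_n => /ltW n_le _; rewrite truncn_ge_nat ?expR_ge0 // n_le !andbT.
Qed.

Lemma hits_good n s t : 0 <= s <= T -> 0 <= t <= T -> hits n (s, t) -> good n.
Proof.
move=> /andP[s_ge0 sT] /andP[t_ge0 tT] /and3P[/= hn ha hb].
have expE : expR (- s - t) * expR s * expR t = 1.
  by rewrite -!expRD (_ : - s - t + s + t = 0) ?expR0 //; ring.
apply/andP; split.
  have n_le : n%:R <= eps * expR (s + t).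
    have : n%:R * expR (- s - t) * expR (s + t) <= eps * expR (s + t) by rewrite ler_pM2r ?expR_gt0.
    by rewrite -mulrA -expRD (_ : - s - t + (s + t) = 0) ?expR0 ?mulr1 //; ring.
  apply: le_lt_trans n_le _; apply: le_lt_trans (_ : eps * expR (2 * T) < _).
    by rewrite ler_pM2l // ler_expR; lra.
  by rewrite gtr_pMl ?expR_gt0.
have -> : approx n =
    n%:R * expR (- s - t) * (expR s * dist_int (n%:R * al)) * (expR t * dist_int (n%:R * be)).
  by rewrite -[LHS]mulr1 -expE; ring.
have := dist_int_ge0 (n%:R * al); have := dist_int_ge0 (n%:R * be) => ? ?.
rewrite (_ : eps ^+ 3 = eps * eps * eps); last by ring.
apply: ler_pM; rewrite ?mulr_ge0 ?expR_ge0 //.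
by apply: ler_pM; rewrite ?mulr_ge0 ?expR_ge0.
Qed.

Lemma times_in_X_eps_cover :
  times_in_X_eps = \bigcup_(n in [set` good_seq]) hit_set n.
Proof.
apply/seteqP; split => [[s t] [/= sT tT] | [s t] [n /= n_good /and3P[sT tT hit]]].
  have [[s_ge0 _] [t_ge0 _]] := (andP sT, andP tT).
  move=> /(in_X_eps_hits s_ge0 t_ge0) [n n_gt0 hit].
  exists n; last by rewrite /hit_set /= sT tT.
  by rewrite /= mem_good_seq n_gt0 (hits_good sT tT hit).
have [[s_ge0 _] [t_ge0 _]] := (andP sT, andP tT).
split => //; apply/(in_X_eps_hits s_ge0 t_ge0); exists n => //.
by move: n_good; rewrite mem_good_seq => /andP[].
Qed.

Lemma measure_times_in_X_eps_le (x : R) : 0 <= x ->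
  {in good_seq, forall n, triangle_leg n <= x} ->
  ((mu \x mu) times_in_X_eps <= ((size good_seq)%:R * (x ^+ 2 / 2))%:E)%E.
Proof.
move=> x_ge0 leg_le; have fin := finite_seq good_seq.
have hit_m n : [set` good_seq] n -> measurable (hit_set n) by move=> _; exact: measurable_hit_set.
have hit_le n : n \in good_seq -> ((mu \x mu) (hit_set n) <= (x ^+ 2 / 2)%:E)%E.
  move=> n_good; have := n_good; rewrite mem_good_seq => /andP[n_gt0 _].
  apply: le_trans (measure_hit_set_le n_gt0) _.
  rewrite lee_fin ler_pM2r // lerXn2r ?nnegrE ?le_max ?lexx //.
  by rewrite ge_max x_ge0 leg_le.
rewrite times_in_X_eps_cover.
apply: le_trans (content_sub_fsum (mu \x mu)%E fin hit_m (fin_bigcup_measurable fin hit_m) _) _ => //.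
rewrite -fsbig_seq ?uniq_good_seq // big_seq.
apply: le_trans (lee_sum _ hit_le) _.
by rewrite -big_seq sumEFin big_const_seq count_predT iter_addr_0 mulr_natl.
Qed.

Lemma good_natM k n : (k * n)%:R < expR (2 * T) -> k%:R ^+ 3 * approx n <= eps ^+ 3 ->
  good (k * n).
Proof.
move=> kn_lt approx_le; apply/andP; split => //; apply: le_trans approx_le.
have ha : dist_int ((k * n)%:R * al) <= k%:R * dist_int (n%:R * al).
  by rewrite natrM -mulrA dist_int_natM.
have hb : dist_int ((k * n)%:R * be) <= k%:R * dist_int (n%:R * be).
  by rewrite natrM -mulrA dist_int_natM.
apply: le_trans (_ : (k * n)%:R * (k%:R * dist_int (n%:R * al)) *
                       (k%:R * dist_int (n%:R * be)) <= _).
  by apply: ler_pM => //; rewrite ?mulr_ge0 ?dist_int_ge0 ?ler_wpM2l.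
by rewrite natrM (_ : _ * _ = k%:R ^+ 3 * approx n) //; ring.
Qed.

Lemma leq_size_good_seq K n : (0 < n)%N -> K%:R * n%:R < expR (2 * T) ->
  K%:R ^+ 3 * approx n <= eps ^+ 3 -> (K <= size good_seq)%N.
Proof.
move=> n_gt0 Kn_lt approx_le.
rewrite -(size_iota 0 K) -(size_map (fun k => k.+1 * n)%N).
apply: uniq_leq_size.
  rewrite map_inj_uniq ?iota_uniq // => a b /eqP.
  by rewrite eqn_pmul2r // => /eqP [].
move=> m /mapP[k]; rewrite mem_iota add0n => k_lt ->.
have kK : k.+1%:R <= K%:R :> R by rewrite ler_nat.
rewrite mem_good_seq muln_gt0 n_gt0 /=; apply: good_natM.
  by apply: le_lt_trans Kn_lt; rewrite natrM ler_pM2r ?ltr0n.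
apply: le_trans approx_le; rewrite ler_pM2r ?lerXn2r ?nnegrE //.
by rewrite !mulr_gt0 ?ltr0n ?dist_int_gt0.
Qed.

Lemma lt_triangle_leg (x : R) n : (0 < n)%N -> x < triangle_leg n ->
  approx n * expR x < eps ^+ 3 /\ n%:R * expR x < expR (2 * T) * eps.
Proof.
move=> n_gt0; have n_gt0' : (0 : R) < n%:R by rewrite ltr0n.
have da_gt0 := dist_int_gt0 al_irr n_gt0; have db_gt0 := dist_int_gt0 be_irr n_gt0.
set da := dist_int _ in da_gt0 *; set db := dist_int _ in db_gt0 *.
have : Num.min T (ln eps - ln da) <= T /\ Num.min T (ln eps - ln da) <= ln eps - ln da.
  by split; rewrite ge_min lexx ?orbT.
have : Num.min T (ln eps - ln db) <= T /\ Num.min T (ln eps - ln db) <= ln eps - ln db.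
  by split; rewrite ge_min lexx ?orbT.
rewrite /triangle_leg -/da -/db => -[minb_le_T minb_le] [mina_le_T mina_le] x_lt; split.
  rewrite -[X in _ < X](lnK (x := eps ^+ 3)) ?posrE ?exprn_gt0 //.
  rewrite -[approx n](lnK (x := approx n)) ?posrE ?mulr_gt0 // -expRD ltr_expR.
  by rewrite !lnM ?posrE ?mulr_gt0 // -/da -/db; lra.
rewrite -[n%:R](lnK (x := n%:R)) ?posrE // -[eps](lnK (x := eps)) ?posrE //.
by rewrite -!expRD ltr_expR; lra.
Qed.

Lemma size_good_seq_of_long_leg n : 1 <= T -> n \in good_seq ->
  6 * ln T < triangle_leg n -> T ^+ 2 - 1 <= (size good_seq)%:R.
Proof.
move=> T_ge1 n_good long_leg; have := n_good; rewrite mem_good_seq => /andP[n_gt0 _].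
have := lt_triangle_leg n_gt0 long_leg; rewrite expRM_natl lnK ?posrE; last lra.
move=> [approx_lt n_lt]; pose K := Num.truncn (T ^+ 2).
have T2_ge0 : 0 <= T ^+ 2 by rewrite exprn_ge0 //; lra.
have K_le : K%:R <= T ^+ 2 by rewrite truncn_le.
have K_gt : T ^+ 2 < K.+1%:R by exact: truncnS_gt.
have T26 : T ^+ 2 <= T ^+ 6 by exact: ler_weXn2l.
suff K_le_size : (K <= size good_seq)%N.
  by rewrite lerBlDr (le_trans (ltW K_gt)) // -natr1 lerD2r ler_nat.
have K3 : K%:R ^+ 3 <= T ^+ 6 :> R.
  by rewrite (_ : 6 = 2 * 3)%N // exprM lerXn2r ?nnegrE.
have approx_gt0 : 0 < approx n by rewrite !mulr_gt0 ?ltr0n ?dist_int_gt0.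
apply: (leq_size_good_seq n_gt0).
  apply: le_lt_trans (_ : T ^+ 6 * n%:R < _); first by rewrite ler_pM2r ?ltr0n // (le_trans K_le T26).
  by rewrite mulrC; apply: lt_le_trans n_lt _; rewrite ger_pMr ?expR_gt0 // ltW.
by apply: le_trans (ltW approx_lt); rewrite mulrC ler_pM2l.
Qed.

End Counting.

Theorem theorem3p1 (R : realType) (al be gam eps T : R) :
  (forall q : rat, al <> ratr q) ->
  (forall q : rat, be <> ratr q) ->
  0 < gam < 1 ->
  0 < eps < 2^-1 ->
  expR 1 < T ->
  ((gam * T ^+ 2)%:E <=
     ((@lebesgue_measure R) \x (@lebesgue_measure R))%E
       [set st : R * R | [/\ 0 <= st.1 <= T, 0 <= st.2 <= T &
                             in_X_eps eps (a_st st.1 st.2 *m tau al be)]%R])%E ->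
  gam / 18 <= (ln T) ^+ 2 / T ^+ 2 * (count_good al be eps T)%:R.
Proof.
move=> al_irr be_irr /andP[gam_gt0 gam_lt1] /andP[eps_gt0 eps_lt_half] e_lt_T hmeas.
have eps_lt1 : eps < 1 by apply: lt_le_trans eps_lt_half _; rewrite invf_le1 ?ler1n.
have e_ge2 : 2 <= expR (1 : R) by rewrite (le_trans _ (expR_ge1Dx 1)).
have T_gt1 : 1 < T by lra.
have lnT_gt1 : 1 < ln T by rewrite -ltr_expR lnK ?posrE //; lra.
have lnT2_ge1 : 1 <= ln T ^+ 2 by rewrite exprn_ege1 //; lra.
have T2_gt4 : 4 < T ^+ 2 by rewrite expr2; nra.
rewrite count_goodE mulrAC ler_pdivlMr; last lra.
have [[n [n_good long_leg]] | short_legs] :=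
  pselect (exists n, n \in good_seq al be eps T /\ 6 * ln T < triangle_leg al be eps T n).
  have := size_good_seq_of_long_leg eps_gt0 eps_lt1 al_irr be_irr (ltW T_gt1) n_good long_leg.
  have : 0 <= (size (good_seq al be eps T))%:R :> R by [].
  nra.
have leg_le : {in good_seq al be eps T, forall n, triangle_leg al be eps T n <= 6 * ln T}.
  by move=> n n_good; rewrite leNgt; apply/negP => long; apply: short_legs; exists n.
have leg_ge0 : 0 <= 6 * ln T by lra.
have := le_trans hmeas (measure_times_in_X_eps_le eps_gt0 eps_lt1 al_irr be_irr leg_ge0 leg_le).
rewrite lee_fin; nra.
Qed.
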